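(* Let $\phi(\beta)=\sum_{k=0}^\infty k!\,\beta^k$ as a formal power series. Then for all integers $n\ge1$ and $k\ge0$, \[ [\beta^k]\,\phi(\beta)^n\le k!\prod_{j=1}^k\Big(1+\frac{n-1}{j^2}\Big)\le 6^n\,k!. \] Equivalently, $\sum_{l_1+\dots+l_n=k,\ l_i\ge0}\prod_{i=1}^n l_i!\le k!\prod_{j=1}^k(1+(n-1)/j^2)$.
   Context: $[\beta^k]F(\beta)$ denotes the coefficient of $\beta^k$ in the formal power series $F$. *)

From HB Require Import structures.
From mathcomp Require Import all_boot all_order all_algebra.
Set Implicit Arguments. Unset Strict Implicit. Unset Printing Implicit Defensive.

Definition fps := nat -> nat.

Definition fps_mul (f g : fps) : fps :=
  fun k => (\sum_(i < k.+1) f i * g (k - i))%N.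

Definition fps_one : fps := fun k => (k == 0%N : nat).

Fixpoint fps_exp (f : fps) (n : nat) : fps :=
  match n with
  | 0 => fps_one
  | n'.+1 => fps_mul f (fps_exp f n')
  end.

Definition coeff (k : nat) (F : fps) : nat := F k.

Definition phi : fps := fun k => k`!.

(* Write a_n(k) for [beta^k] phi^n.  Weighting the convolution
   a_{n+1}(k+1) = sum_i i! a_n(k+1-i) by k+1 = i + (k+1-i) and using
   (i+1)^2 + (k-i+1)^2 <= (k+1)^2 + 1, induction on n gives
   (k+1) a_n(k+1) <= ((k+1)^2 + n - 1) a_n(k); iterating in k yields
   a_n(k) k! <= prod_{j<=k} (j^2 + n - 1), which is the first inequality.
   For the second, (j^2 + c + 1) j^2 <= (j^2 + c)(j^2 + 1) reduces
   prod_j (1 + c/j^2) to the c-th power of prod_j (1 + 1/j^2) <= 4, and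
   the latter follows from the telescoping bound
   (m+1) prod_{j<=m} (1 + 1/j^2) <= 4m. *)
From HB Require Import structures.
From mathcomp Require Import all_boot all_order all_algebra zify.
Import GRing.Theory Num.Theory.

Lemma fps_exp_phi_coef0 n : fps_exp phi n 0 = 1.
Proof. by elim: n => //= n IHn; rewrite /fps_mul big_ord1 IHn. Qed.

Lemma convolution_term_le i q n f x y :
  q.+1 * y + x <= (q.+1 ^ 2 + n) * x ->
  i.+1 * (i.+1 * f * x) + f * (q.+1 * y) + f * x <= ((i + q).+1 ^ 2 + n.+1) * (f * x).
Proof.
move=> /(leq_mul (leqnn f)) hq.
have hsq : i.+1 ^ 2 + q.+1 ^ 2 + n <= (i + q).+1 ^ 2 + n.+1 by nia.
apply: leq_trans (leq_mul hsq (leqnn (f * x))); nia.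
Qed.

(* The term a_n(k) on the left keeps the truncated n - 1 out of the statement. *)
Lemma fps_exp_phi_succ_le n k :
  k.+1 * fps_exp phi n k.+1 + fps_exp phi n k <= (k.+1 ^ 2 + n) * fps_exp phi n k.
Proof.
elim: n k => [|n IHn] k.
  by rewrite /= /fps_one muln0 add0n addn0 leq_pmull.
rewrite [fps_exp _ n.+1]/= /fps_mul /phi; set a := fps_exp phi n.
have -> : k.+1 * \sum_(i < k.+2) i`! * a (k.+1 - i)
    = \sum_(i < k.+1) i.+1 * (i.+1`! * a (k - i))
      + \sum_(i < k.+1) i`! * ((k - i).+1 * a (k - i).+1).
  rewrite big_distrr /= (eq_bigr (fun i : 'I_k.+2 =>
       i * (i`! * a (k.+1 - i)) + (k.+1 - i) * (i`! * a (k.+1 - i)))); last first.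
    by move=> i _; rewrite -mulnDl subnKC // -ltnS.
  rewrite big_split /= [in X in X + _ = _]big_ord_recl [in X in _ + X = _]big_ord_recr /=.
  rewrite mul0n add0n subnn mul0n addn0.
  congr (_ + _); apply: eq_bigr => i _.
  by rewrite subSn 1?mulnCA // -ltnS.
rewrite -!big_split big_distrr /=; apply: leq_sum => -[i /=]; rewrite ltnS => hi _.
rewrite factS; set q := k - i.
have -> : k = i + q by rewrite subnKC.
exact: convolution_term_le (IHn q).
Qed.

Lemma fps_exp_phi_mul_fact_le n k :
  fps_exp phi n.+1 k * k`! <= \prod_(1 <= j < k.+1) (j ^ 2 + n).
Proof.
elim: k => [|k IHk]; first by rewrite fps_exp_phi_coef0 big_geq.
have rec : k.+1 * fps_exp phi n.+1 k.+1 <= (k.+1 ^ 2 + n) * fps_exp phi n.+1 k.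
  by have := fps_exp_phi_succ_le n.+1 k; rewrite addnS mulSn [X in X <= _]addnC leq_add2l.
rewrite big_nat_recr // factS mulnA [_ * k.+1]mulnC [X in _ <= X]mulnC.
apply: leq_trans (leq_mul rec (leqnn _)) _.
by rewrite -mulnA leq_mul2l IHk orbT.
Qed.

Lemma prod_sq_fact k : \prod_(1 <= j < k.+1) j ^ 2 = k`! ^ 2.
Proof.
elim: k => [|k IHk]; first by rewrite big_geq.
by rewrite big_nat_recr //= IHk factS expnMn mulnC.
Qed.

Lemma succ_mul_prod_sq_add1_le m :
  m.+2 * \prod_(1 <= j < m.+2) (j ^ 2 + 1) <= 4 * m.+1 * m.+1`! ^ 2.
Proof.
elim: m => [|m IHm]; first by rewrite big_nat1.
rewrite big_nat_recr //= factS.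
move: IHm; set P := \prod_(_ <= _ < _) _; set F := m.+1`!; clearbody P F => IHm.
(* (m+1)(m+3) = (m+2)^2 - 1 *)
have key : m.+1 * m.+3 * (m.+2 ^ 2 + 1) <= m.+2 ^ 4 by nia.
rewrite -(leq_pmul2l (ltn0Sn m.+1)).
have := leq_mul (leqnn (m.+3 * (m.+2 ^ 2 + 1))) IHm.
have := leq_mul (leqnn (4 * F ^ 2)) key.
nia.
Qed.

Lemma prod_sq_add1_le k : \prod_(1 <= j < k.+1) (j ^ 2 + 1) <= 4 * k`! ^ 2.
Proof.
case: k => [|m]; first by rewrite big_geq.
rewrite -(leq_pmul2l (ltn0Sn m.+1)); apply: leq_trans (succ_mul_prod_sq_add1_le m) _.
by nia.
Qed.

Lemma prod_sq_add_le c k : \prod_(1 <= j < k.+1) (j ^ 2 + c) <= 4 ^ c * k`! ^ 2.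
Proof.
elim: c => [|c IHc].
  by rewrite expn0 mul1n -prod_sq_fact; under eq_bigr do rewrite addn0.
have fact_sq_gt0 : 0 < k`! ^ 2 by rewrite expn_gt0 fact_gt0.
rewrite -(leq_pmul2r fact_sq_gt0) -{1}prod_sq_fact -big_split /=.
apply: (@leq_trans (\prod_(1 <= j < k.+1) ((j ^ 2 + c) * (j ^ 2 + 1)))).
  by apply: leq_prod => j _; nia.
rewrite big_split /= expnS.
by apply: leq_trans (leq_mul IHc (prod_sq_add1_le k)) _; nia.
Qed.

Local Open Scope ring_scope.

Lemma prod_one_add_div_sq (R : numFieldType) (c k : nat) :
  \prod_(1 <= j < k.+1) (1 + c%:R / (j ^ 2)%N%:R : R)
    = (\prod_(1 <= j < k.+1) (j ^ 2 + c))%N%:R / (k`! ^ 2)%N%:R.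
Proof.
rewrite -prod_sq_fact !natr_prod -prodf_div !big_nat; apply: eq_bigr => j /andP[j_gt0 _].
by rewrite natrD mulrDl divff // pnatr_eq0 -lt0n expn_gt0 j_gt0.
Qed.

Theorem lemma5 (n k : nat) (hn : (1 <= n)%N) :
  ((coeff k (fps_exp phi n))%:R : rat)
    <= (k`!)%:R * \prod_(1 <= j < k.+1) (1 + (n - 1)%N%:R / (j ^ 2)%N%:R)
  /\ (k`!)%:R * \prod_(1 <= j < k.+1) (1 + (n - 1)%N%:R / (j ^ 2)%N%:R)
    <= (6%:R : rat) ^+ n * (k`!)%:R.
Proof.
case: n hn => [//|n] _; rewrite subSS subn0 prod_one_add_div_sq /coeff.
have fact_sq_gt0 : (0 : rat) < (k`! ^ 2)%N%:R by rewrite ltr0n expn_gt0 fact_gt0.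
split.
  rewrite mulrA ler_pdivlMr // -!natrM ler_nat expnS expn1 mulnA [(k`! * _)%N]mulnC.
  exact: leq_mul (fps_exp_phi_mul_fact_le n k) (leqnn _).
rewrite mulrA ler_pdivrMr // -natrX -!natrM ler_nat -mulnA mulnCA.
have pow4_le_pow6S : (4 ^ n <= 6 ^ n.+1)%N.
  by elim: n => // n IHn; rewrite [(4 ^ _)%N]expnS [(6 ^ _)%N]expnS leq_mul.
apply: leq_mul => //; apply: leq_trans (prod_sq_add_le n k) _.
exact: leq_mul pow4_le_pow6S (leqnn _).
Qed.
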